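(* For all $a,b>0$, $H(a,b)\le\lambda_s(a,b)\le G(a,b)$ whenever $-3\le s\le -1$. These bounds are best possible: the inequality $H(a,b)\le \lambda_s(a,b)$ holds for all $a,b>0$ if and only if $s\ge -3$, and the inequality $\lambda_s(a,b)\le G(a,b)$ holds for all $a,b>0$ if and only if $s\le -1$.
   Context: For $a,b>0$ with $a\neq b$ define $$\lambda_s(a,b)=\begin{cases}\dfrac{s-1}{s+1}\cdot\dfrac{a^{s+1}+b^{s+1}-2\left(\frac{a+b}{2}\right)^{s+1}}{a^s+b^s-2\left(\frac{a+b}{2}\right)^s}, & s\in\mathbb{R}\setminus\{-1,0,1\},\\[3mm] \dfrac{2\log\frac{a+b}{2}-\log a-\log b}{\frac{1}{2a}+\frac{1}{2b}-\frac{2}{a+b}}, & s=-1,\\[3mm] \dfrac{a\log a+b\log b-(a+b)\log\frac{a+b}{2}}{2\log\frac{a+b}{2}-\log a-\log b}, & s=0,\\[3mm] \dfrac{(b-a)^2}{4\left(a\log a+b\log b-(a+b)\log\frac{a+b}{2}\right)}, & s=1,\end{cases}$$ and $\lambda_s(a,a)=a$. The harmonic and geometric means are $H(a,b)=2(1/a+1/b)^{-1}$ and $G(a,b)=\sqrt{ab}$. *)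

From Stdlib Require Import Reals.
Open Scope R_scope.

Definition Amean (a b : R) : R := (a + b) / 2.

Definition Hmean (a b : R) : R := 2 * / (/ a + / b).

Definition Gmean (a b : R) : R := sqrt (a * b).

Definition lambda (s a b : R) : R :=
  if Req_EM_T a b then a
  else if Req_EM_T s (-1) then
    (2 * ln (Amean a b) - ln a - ln b) / (/ (2 * a) + / (2 * b) - 2 / (a + b))
  else if Req_EM_T s 0 then
    (a * ln a + b * ln b - (a + b) * ln (Amean a b)) / (2 * ln (Amean a b) - ln a - ln b)
  else if Req_EM_T s 1 then
    (b - a) ^ 2 / (4 * (a * ln a + b * ln b - (a + b) * ln (Amean a b)))
  else
    (s - 1) / (s + 1) *
    ((Rpower a (s + 1) + Rpower b (s + 1) - 2 * Rpower (Amean a b) (s + 1)) /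
     (Rpower a s + Rpower b s - 2 * Rpower (Amean a b) s)).

From Stdlib Require Import Reals Lra Psatz.
From Coquelicot Require Import Coquelicot.
Open Scope R_scope.

(* For 0 < a < b put A = (a+b)/2 and let phi be the tent
   function phi(x) = x - a on [a,A], phi(x) = b - x on [A,b].  Then
     I_k(a,b) := int_a^b x^k phi(x) dx = (a^(k+2) + b^(k+2) - 2 A^(k+2)) / ((k+1)(k+2))
   (with logarithms for k = -1, -2), so lambda_s = I_(s-1) / I_(s-2) is the mean of x
   for the positive weight x^(s-2) phi.  Consequently lambda_s - c has the sign of
     D_k(c) := int_a^b x^k (x - c) phi(x) dx,   k = s - 2,
   and since x^t - c^t and x - c have the same sign for t >= 0, c^t D_k(c) <= D_(k+t)(c).
   Integrals are never formed: each is a difference of explicit antiderivatives, and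
   comparisons of integrands are turned into comparisons of integrals by the mean value
   theorem.  The two-sided bound then reduces to the explicit endpoint facts
   D_(-5)(H) >= 0 (s = -3) and D_(-3)(G) <= 0 (s = -1).  Sharpness: for s < -3 the pair
   (1, b) with b small violates H <= lambda_s, and for s > -1 the pair (1-h, 1+h) with h
   small violates lambda_s <= G, by a second-order expansion of x^(s-2) near 1. *)

Lemma Rpower_pos x k : 0 < Rpower x k.
Proof. apply exp_pos. Qed.

Lemma Rpower_succ x k : 0 < x -> Rpower x (k + 1) = Rpower x k * x.
Proof. intros Hx. rewrite Rpower_plus, Rpower_1; auto. Qed.

Lemma Rpower_opp1 x : 0 < x -> Rpower x (-1) = / x.
Proof. intros Hx. replace (-1) with (- (1)) by ring. rewrite Rpower_Ropp, Rpower_1; auto. Qed.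

Lemma Rpower_base1 k : Rpower 1 k = 1.
Proof. unfold Rpower. rewrite ln_1, Rmult_0_r. apply exp_0. Qed.

Lemma Rpower_inv_base x k : 0 < x -> Rpower (/ x) k = Rpower x (- k).
Proof. intros Hx. unfold Rpower. rewrite ln_Rinv by lra. f_equal. ring. Qed.

Lemma Rpower_le_l_nonpos x y e : e <= 0 -> 0 < x <= y -> Rpower y e <= Rpower x e.
Proof.
  intros He Hxy. replace e with (- - e) by ring.
  rewrite (Rpower_Ropp y (- e)), (Rpower_Ropp x (- e)).
  apply Rinv_le_contravar; [apply Rpower_pos|]. apply Rle_Rpower_l; lra.
Qed.

Lemma Rpower_le_r_lt1 x e1 e2 : 0 < x < 1 -> e1 <= e2 -> Rpower x e2 <= Rpower x e1.
Proof.
  intros Hx He.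
  assert (Hinv : forall e, Rpower x e = Rpower (/ x) (- e)).
  { intros e. rewrite Rpower_inv_base by lra. f_equal. ring. }
  rewrite !Hinv. apply Rle_Rpower; [|lra].
  rewrite <- Rinv_1. apply Rinv_le_contravar; lra.
Qed.

Lemma Rpower_comonotone t x c : 0 <= t -> 0 < x -> 0 < c ->
  0 <= (Rpower x t - Rpower c t) * (x - c).
Proof.
  intros Ht Hx Hc. destruct (Rle_dec c x).
  - assert (Rpower c t <= Rpower x t) by (apply Rle_Rpower_l; lra). nra.
  - assert (Rpower x t <= Rpower c t) by (apply Rle_Rpower_l; lra). nra.
Qed.

Lemma is_derive_Rpower x k : 0 < x -> is_derive (fun y => Rpower y k) x (k * Rpower x (k - 1)).
Proof. intros Hx. apply is_derive_Reals, derivable_pt_lim_power; auto. Qed.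

Lemma incr_of_deriv (F f : R -> R) u v : u <= v ->
  (forall x, u <= x <= v -> is_derive F x (f x)) ->
  (forall x, u <= x <= v -> 0 <= f x) -> F u <= F v.
Proof.
  intros Huv HF Hf. destruct (Req_dec u v) as [->|Hne]; [lra|].
  destruct (MVT_cor2 F f u v) as [x [Hx Hmid]]; [lra| |].
  - intros x Hx. apply is_derive_Reals, HF; lra.
  - assert (0 <= f x) by (apply Hf; lra). nra.
Qed.

Lemma strict_incr_of_deriv (F f : R -> R) u v : u < v ->
  (forall x, u <= x <= v -> is_derive F x (f x)) ->
  (forall x, u < x < v -> 0 < f x) -> F u < F v.
Proof.
  intros Huv HF Hf.
  destruct (MVT_cor2 F f u v) as [x [Hx Hmid]]; [lra| |].
  - intros x Hx. apply is_derive_Reals, HF; lra.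
  - assert (0 < f x) by (apply Hf; lra). nra.
Qed.

Lemma increment_le (F f G g : R -> R) u v : u <= v ->
  (forall x, u <= x <= v -> is_derive F x (f x)) ->
  (forall x, u <= x <= v -> is_derive G x (g x)) ->
  (forall x, u <= x <= v -> g x <= f x) -> G v - G u <= F v - F u.
Proof.
  intros Huv HF HG Hgf.
  enough (F u - G u <= F v - G v) by lra.
  apply (incr_of_deriv (fun x => F x - G x) (fun x => f x - g x)); auto.
  - intros x Hx. apply (is_derive_minus F G); auto.
  - intros x Hx. specialize (Hgf x Hx). lra.
Qed.

Definition prim (j x : R) : R :=
  if Req_EM_T j (-1) then ln x else Rpower x (j + 1) / (j + 1).

Lemma is_derive_prim j x : 0 < x -> is_derive (prim j) x (Rpower x j).
Proof.
  intros Hx. unfold prim. destruct (Req_EM_T j (-1)) as [->|Hj].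
  - rewrite Rpower_opp1 by lra. apply is_derive_Reals, derivable_pt_lim_ln; lra.
  - apply (is_derive_ext (fun y => / (j + 1) * Rpower y (j + 1))).
    { intros t. unfold Rdiv. apply Rmult_comm. }
    replace (Rpower x j) with (/ (j + 1) * ((j + 1) * Rpower x (j + 1 - 1)))
      by (replace (j + 1 - 1) with j by ring; field; lra).
    apply is_derive_scal, is_derive_Rpower; auto.
Qed.

Lemma is_derive_prim_quad k al be ga x : 0 < x ->
  is_derive (fun y => al * prim (k + 2) y + be * prim (k + 1) y + ga * prim k y) x
    (Rpower x k * (al * x * x + be * x + ga)).
Proof.
  intros Hx.
  replace (Rpower x k * (al * x * x + be * x + ga))
    with (al * Rpower x (k + 2) + be * Rpower x (k + 1) + ga * Rpower x k)
    by (replace (k + 2) with (k + 1 + 1) by ring; rewrite !Rpower_succ by lra; ring).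
  apply (is_derive_plus (fun y => al * prim (k + 2) y + be * prim (k + 1) y)).
  - apply (is_derive_plus (fun y => al * prim (k + 2) y)); apply is_derive_scal, is_derive_prim; auto.
  - apply is_derive_scal, is_derive_prim; auto.
Qed.

(* Integrals against phi are
   expressed through antiderivatives L on [a,A] and M on [A,b]. *)
Definition tent_sum (L M : R -> R) (a b : R) : R :=
  (L ((a + b) / 2) - L a) + (M b - M ((a + b) / 2)).

Lemma tent_sum_le (L l L' l' M m M' m' : R -> R) a b : a < b ->
  (forall x, a <= x <= (a + b) / 2 -> is_derive L x (l x) /\ is_derive L' x (l' x)) ->
  (forall x, (a + b) / 2 <= x <= b -> is_derive M x (m x) /\ is_derive M' x (m' x)) ->
  (forall x, a <= x <= (a + b) / 2 -> l x <= l' x) ->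
  (forall x, (a + b) / 2 <= x <= b -> m x <= m' x) ->
  tent_sum L M a b <= tent_sum L' M' a b.
Proof.
  intros Hab HL HM Hl Hm. unfold tent_sum.
  assert (L ((a + b) / 2) - L a <= L' ((a + b) / 2) - L' a).
  { apply (increment_le L' l' L l); [lra| apply HL | apply HL | auto]. }
  assert (M b - M ((a + b) / 2) <= M' b - M' ((a + b) / 2)).
  { apply (increment_le M' m' M m); [lra| apply HM | apply HM | auto]. }
  lra.
Qed.

Lemma tent_sum_scal s (L M : R -> R) a b :
  tent_sum (fun y => s * L y) (fun y => s * M y) a b = s * tent_sum L M a b.
Proof. unfold tent_sum. ring. Qed.

(* tent k a b = the integral of x^k phi(x) over [a,b]. *)
Definition tent (k a b : R) : R :=
  tent_sum (fun y => prim (k + 1) y - a * prim k y)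
           (fun y => b * prim k y - prim (k + 1) y) a b.

Definition dev (k c a b : R) : R := tent (k + 1) a b - c * tent k a b.

Lemma tent_pos k a b : 0 < a < b -> 0 < tent k a b.
Proof.
  intros [Ha Hab]. unfold tent, tent_sum.
  assert (Hleft : prim (k + 1) a - a * prim k a
                  < prim (k + 1) ((a + b) / 2) - a * prim k ((a + b) / 2)).
  { apply (strict_incr_of_deriv (fun y => prim (k + 1) y - a * prim k y)
            (fun x => Rpower x k * (0 * x * x + 1 * x + - a))); [lra| |].
    - intros x Hx. apply (is_derive_ext
        (fun y => 0 * prim (k + 2) y + 1 * prim (k + 1) y + - a * prim k y)).
      { intros y. simpl. ring. }
      apply is_derive_prim_quad; lra.
    - intros x Hx. apply Rmult_lt_0_compat; [apply Rpower_pos | lra]. }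
  assert (Hright : b * prim k ((a + b) / 2) - prim (k + 1) ((a + b) / 2)
                   <= b * prim k b - prim (k + 1) b).
  { apply (incr_of_deriv (fun y => b * prim k y - prim (k + 1) y)
            (fun x => Rpower x k * (0 * x * x + - 1 * x + b))); [lra| |].
    - intros x Hx. apply (is_derive_ext
        (fun y => 0 * prim (k + 2) y + - 1 * prim (k + 1) y + b * prim k y)).
      { intros y. simpl. ring. }
      apply is_derive_prim_quad; lra.
    - intros x Hx. apply Rmult_le_pos; [left; apply Rpower_pos | lra]. }
  lra.
Qed.

Definition dev_left (k c a y : R) : R :=
  prim (k + 2) y - (c + a) * prim (k + 1) y + c * a * prim k y.
Definition dev_right (k c b y : R) : R :=
  - prim (k + 2) y + (c + b) * prim (k + 1) y - c * b * prim k y.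

Lemma dev_tent_sum k c a b : dev k c a b = tent_sum (dev_left k c a) (dev_right k c b) a b.
Proof.
  unfold dev, tent, dev_left, dev_right, tent_sum.
  replace (k + 1 + 1) with (k + 2) by ring. ring.
Qed.

Lemma is_derive_dev_left k c a x : 0 < x ->
  is_derive (dev_left k c a) x (Rpower x k * (x - c) * (x - a)).
Proof.
  intros Hx. apply (is_derive_ext
    (fun y => 1 * prim (k + 2) y + - (c + a) * prim (k + 1) y + c * a * prim k y)).
  { intros y. unfold dev_left. simpl. ring. }
  replace (Rpower x k * (x - c) * (x - a))
    with (Rpower x k * (1 * x * x + - (c + a) * x + c * a)) by ring.
  apply is_derive_prim_quad; auto.
Qed.

Lemma is_derive_dev_right k c b x : 0 < x ->
  is_derive (dev_right k c b) x (Rpower x k * (x - c) * (b - x)).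
Proof.
  intros Hx. apply (is_derive_ext
    (fun y => - 1 * prim (k + 2) y + (c + b) * prim (k + 1) y + - (c * b) * prim k y)).
  { intros y. unfold dev_right. simpl. ring. }
  replace (Rpower x k * (x - c) * (b - x))
    with (Rpower x k * (- 1 * x * x + (c + b) * x + - (c * b))) by ring.
  apply is_derive_prim_quad; auto.
Qed.

Lemma dev_lower k c a b (PL pl PR pr : R -> R) : 0 < a < b ->
  (forall x, a <= x <= (a + b) / 2 -> is_derive PL x (pl x)) ->
  (forall x, (a + b) / 2 <= x <= b -> is_derive PR x (pr x)) ->
  (forall x, a <= x <= (a + b) / 2 -> pl x <= Rpower x k * (x - c) * (x - a)) ->
  (forall x, (a + b) / 2 <= x <= b -> pr x <= Rpower x k * (x - c) * (b - x)) ->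
  tent_sum PL PR a b <= dev k c a b.
Proof.
  intros Hab HL HR Hl Hr. rewrite dev_tent_sum.
  apply (tent_sum_le PL pl _ (fun x => Rpower x k * (x - c) * (x - a))
                     PR pr _ (fun x => Rpower x k * (x - c) * (b - x))); auto; [lra| |].
  - intros x Hx. split; [auto | apply is_derive_dev_left; lra].
  - intros x Hx. split; [auto | apply is_derive_dev_right; lra].
Qed.

(* Raising the exponent by t >= 0 multiplies the integrand x^k (x-c) phi(x) by
   x^t, which dominates c^t exactly where the integrand is nonnegative. *)
Lemma dev_shift k t c a b : 0 <= t -> 0 < c -> 0 < a < b ->
  Rpower c t * dev k c a b <= dev (k + t) c a b.
Proof.
  intros Ht Hc Hab. rewrite (dev_tent_sum k), <- tent_sum_scal.
  assert (Hpt : forall x, 0 < x -> 0 <= x - a -> 0 <= b - x -> forall u, 0 <= u ->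
            Rpower c t * (Rpower x k * (x - c) * u) <= Rpower x (k + t) * (x - c) * u).
  { intros x Hx Hxa Hxb u Hu. rewrite Rpower_plus.
    assert (0 <= Rpower x k * ((Rpower x t - Rpower c t) * (x - c)) * u).
    { apply Rmult_le_pos; [apply Rmult_le_pos|]; auto.
      - left; apply Rpower_pos.
      - apply Rpower_comonotone; auto. }
    nra. }
  apply dev_lower with
    (pl := fun x => Rpower c t * (Rpower x k * (x - c) * (x - a)))
    (pr := fun x => Rpower c t * (Rpower x k * (x - c) * (b - x))); [auto| | | |].
  - intros x Hx. apply is_derive_scal, is_derive_dev_left; lra.
  - intros x Hx. apply is_derive_scal, is_derive_dev_right; lra.
  - intros x Hx. apply Hpt; lra.
  - intros x Hx. apply Hpt; lra.
Qed.

Ltac decide_eqs := repeat match goal with |- context [Req_EM_T ?x ?y] =>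
  destruct (Req_EM_T x y); try (exfalso; lra) end.

Lemma tent_closed k a b : 0 < a -> 0 < b -> k + 1 <> 0 -> k + 2 <> 0 ->
  tent k a b = (Rpower a (k + 2) + Rpower b (k + 2) - 2 * Rpower ((a + b) / 2) (k + 2))
               / ((k + 2) * (k + 1)).
Proof.
  intros Ha Hb Hk1 Hk2. unfold tent, tent_sum, prim. decide_eqs.
  replace (k + 2) with (k + 1 + 1) by ring.
  rewrite !(Rpower_succ _ (k + 1)), !(Rpower_succ _ k) by lra.
  field. split; lra.
Qed.

Lemma tent_m1 a b : 0 < a -> 0 < b ->
  tent (-1) a b = a * ln a + b * ln b - (a + b) * ln ((a + b) / 2).
Proof.
  intros Ha Hb. unfold tent, tent_sum, prim. decide_eqs.
  replace (-1 + 1 + 1) with 1 by ring. rewrite !Rpower_1 by lra. field.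
Qed.

Lemma tent_m2 a b : 0 < a -> 0 < b -> tent (-2) a b = 2 * ln ((a + b) / 2) - ln a - ln b.
Proof.
  intros Ha Hb. unfold tent, tent_sum, prim. decide_eqs.
  replace (-2 + 1) with (-1) by ring. rewrite !Rpower_opp1 by lra. field. split; lra.
Qed.

Lemma lambda_tent s a b : 0 < a < b -> lambda s a b = tent (s - 1) a b / tent (s - 2) a b.
Proof.
  intros [Ha Hab]. unfold lambda, Amean.
  assert (HA : 0 < (a + b) / 2) by lra.
  destruct (Req_EM_T a b) as [E|_]; [lra|].
  destruct (Req_EM_T s (-1)) as [->|Hs1].
  { replace (-1 - 1) with (-2) by ring. replace (-1 - 2) with (-3) by ring.
    rewrite tent_m2, tent_closed by lra. replace (-3 + 2) with (-1) by ring.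
    rewrite !Rpower_opp1 by lra. unfold Rdiv. f_equal. f_equal. field. split; lra. }
  destruct (Req_EM_T s 0) as [->|Hs0].
  { replace (0 - 1) with (-1) by ring. replace (0 - 2) with (-2) by ring.
    rewrite tent_m1, tent_m2 by lra. reflexivity. }
  destruct (Req_EM_T s 1) as [->|Hs1'].
  { replace (1 - 1) with 0 by ring. replace (1 - 2) with (-1) by ring.
    assert (Hpos := tent_pos (-1) a b (conj Ha Hab)).
    rewrite tent_m1 in * by lra. rewrite tent_closed by lra. replace (0 + 2) with (1 + 1) by ring.
    rewrite !(Rpower_succ _ 1), !Rpower_1 by lra. field. lra. }
  assert (Hpos := tent_pos (s - 2) a b (conj Ha Hab)).
  rewrite !tent_closed in * by lra.
  replace (s - 1 + 2) with (s + 1) by ring. replace (s - 2 + 2) with s in * by ring.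
  assert (Rpower a s + Rpower b s - 2 * Rpower ((a + b) / 2) s <> 0).
  { intros E. rewrite E in Hpos. unfold Rdiv in Hpos. lra. }
  field. repeat split; lra.
Qed.

Lemma lambda_sub_mul s c a b : 0 < a < b ->
  (lambda s a b - c) * tent (s - 2) a b = dev (s - 2) c a b.
Proof.
  intros Hab. rewrite lambda_tent by auto.
  assert (0 < tent (s - 2) a b) by (apply tent_pos; auto).
  unfold dev. replace (s - 2 + 1) with (s - 1) by ring. field. lra.
Qed.

Lemma le_lambda_of_dev s c a b : 0 < a < b -> 0 <= dev (s - 2) c a b -> c <= lambda s a b.
Proof.
  intros Hab Hd. rewrite <- (lambda_sub_mul s c) in Hd by auto.
  assert (0 < tent (s - 2) a b) by (apply tent_pos; auto). nra.
Qed.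

Lemma lambda_le_of_dev s c a b : 0 < a < b -> dev (s - 2) c a b <= 0 -> lambda s a b <= c.
Proof.
  intros Hab Hd. rewrite <- (lambda_sub_mul s c) in Hd by auto.
  assert (0 < tent (s - 2) a b) by (apply tent_pos; auto). nra.
Qed.

Lemma lt_lambda_of_dev s c a b : 0 < a < b -> 0 < dev (s - 2) c a b -> c < lambda s a b.
Proof.
  intros Hab Hd. rewrite <- (lambda_sub_mul s c) in Hd by auto.
  assert (0 < tent (s - 2) a b) by (apply tent_pos; auto). nra.
Qed.

Lemma Rpower_opp_nat x n : 0 < x -> Rpower x (- INR n) = / x ^ n.
Proof. intros Hx. rewrite Rpower_Ropp, Rpower_pow; auto. Qed.

(* dev (-5) H = (a-b)^4 / (6 a b (a+b)^4). *)
Lemma dev_Hmean_base a b : 0 < a -> 0 < b -> 0 <= dev (-5) (Hmean a b) a b.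
Proof.
  intros Ha Hb. unfold dev. replace (-5 + 1) with (-4) by ring.
  rewrite !tent_closed by lra.
  replace (-4 + 2) with (- INR 2) by (simpl; ring).
  replace (-5 + 2) with (- INR 3) by (simpl; ring).
  rewrite !Rpower_opp_nat by lra. unfold Hmean.
  match goal with |- 0 <= ?e => replace e with ((a - b) ^ 4 / (6 * (a * b) * (a + b) ^ 4))
    by (simpl; field; lra) end.
  apply Rmult_le_pos; [replace ((a - b) ^ 4) with (((a - b) ^ 2) ^ 2) by ring; apply pow2_ge_0|].
  left. apply Rinv_0_lt_compat. apply Rmult_lt_0_compat; [nra | apply pow_lt; lra].
Qed.

Lemma Gmean_pos a b : 0 < a -> 0 < b -> 0 < Gmean a b.
Proof. intros. unfold Gmean. apply sqrt_lt_R0. nra. Qed.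

Lemma Gmean_sq a b : 0 < a -> 0 < b -> Gmean a b * Gmean a b = a * b.
Proof. intros. unfold Gmean. apply sqrt_sqrt. nra. Qed.

Lemma sqrt_le_of_sq x y : 0 <= y -> x <= y * y -> sqrt x <= y.
Proof. intros Hy Hx. rewrite <- (sqrt_square y) by auto. apply sqrt_le_1_alt; auto. Qed.

Lemma Gmean_le_Amean a b : 0 < a -> 0 < b -> Gmean a b <= (a + b) / 2.
Proof.
  intros Ha Hb. unfold Gmean. apply sqrt_le_of_sq; [lra|].
  assert (0 <= (a - b) * (a - b)) by apply Rle_0_sqr. lra.
Qed.

Lemma two_ln_le y : 1 <= y -> 2 * ln y <= y - / y.
Proof.
  intros Hy.
  enough (1 - / 1 - 2 * ln 1 <= y - / y - 2 * ln y) by (rewrite ln_1, Rinv_1 in *; lra).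
  apply (incr_of_deriv (fun t => t - / t - 2 * ln t) (fun t => (1 - / t) ^ 2)); auto.
  - intros x Hx. auto_derive; [lra|]. field. lra.
  - intros x Hx. apply pow2_ge_0.
Qed.

(* With y = A/G >= 1, dev (-3) G = 2 ln y - (y - 1/y). *)
Lemma dev_Gmean_base a b : 0 < a -> 0 < b -> dev (-3) (Gmean a b) a b <= 0.
Proof.
  intros Ha Hb. unfold dev. replace (-3 + 1) with (-2) by ring.
  assert (HG := Gmean_pos a b Ha Hb). assert (HGG := Gmean_sq a b Ha Hb).
  assert (HGA := Gmean_le_Amean a b Ha Hb).
  set (G := Gmean a b) in *. clearbody G. set (A := (a + b) / 2) in *.
  rewrite tent_m2, tent_closed by lra. replace (-3 + 2) with (-1) by ring.
  rewrite !Rpower_opp1 by lra. fold A.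
  assert (Hln : 2 * ln A - ln a - ln b = 2 * ln (A / G)).
  { rewrite ln_div by lra.
    assert (ln a + ln b = 2 * ln G) by (rewrite <- ln_mult, <- HGG, ln_mult by lra; ring).
    lra. }
  assert (Hrat : G * ((/ a + / b - 2 * / A) / (-1 * (-3 + 1))) = A / G - / (A / G)).
  { assert (Eb : b = G * G / a) by (rewrite HGG; field; lra).
    unfold A. rewrite Eb. field. repeat split; nra. }
  assert (Hy : 1 <= A / G).
  { apply (Rmult_le_reg_r G); [auto|]. unfold Rdiv. rewrite Rmult_assoc, Rinv_l; lra. }
  assert (Hl := two_ln_le (A / G) Hy).
  lra.
Qed.

Lemma Hmean_pos a b : 0 < a -> 0 < b -> 0 < Hmean a b.
Proof.
  intros Ha Hb. unfold Hmean. apply Rmult_lt_0_compat; [lra|].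
  apply Rinv_0_lt_compat. apply Rplus_lt_0_compat; apply Rinv_0_lt_compat; auto.
Qed.

(* -3 <= s: raise the exponent -5 of dev_Hmean_base to s - 2. *)
Lemma Hmean_le_lambda_lt s a b : -3 <= s -> 0 < a < b -> Hmean a b <= lambda s a b.
Proof.
  intros Hs Hab. apply le_lambda_of_dev; auto.
  assert (HH := Hmean_pos a b ltac:(lra) ltac:(lra)).
  assert (Hshift := dev_shift (-5) (s + 3) (Hmean a b) a b ltac:(lra) HH Hab).
  replace (-5 + (s + 3)) with (s - 2) in Hshift by ring.
  assert (Hbase := dev_Hmean_base a b ltac:(lra) ltac:(lra)).
  assert (0 < Rpower (Hmean a b) (s + 3)) by apply Rpower_pos.
  nra.
Qed.

(* s <= -1: raise the exponent s - 2 to the -3 of dev_Gmean_base. *)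
Lemma lambda_le_Gmean_lt s a b : s <= -1 -> 0 < a < b -> lambda s a b <= Gmean a b.
Proof.
  intros Hs Hab. apply lambda_le_of_dev; auto.
  assert (HG := Gmean_pos a b ltac:(lra) ltac:(lra)).
  assert (Hshift := dev_shift (s - 2) (- 1 - s) (Gmean a b) a b ltac:(lra) HG Hab).
  replace (s - 2 + (- 1 - s)) with (-3) in Hshift by ring.
  assert (Hbase := dev_Gmean_base a b ltac:(lra) ltac:(lra)).
  assert (0 < Rpower (Gmean a b) (- 1 - s)) by apply Rpower_pos.
  nra.
Qed.

Lemma lambda_diag s a : lambda s a a = a.
Proof. unfold lambda. destruct (Req_EM_T a a); [reflexivity | contradiction]. Qed.

Lemma lambda_sym s a b : lambda s a b = lambda s b a.
Proof.
  destruct (Req_dec a b) as [->|Hab]; [reflexivity|].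
  unfold lambda, Amean; decide_eqs; replace (b + a) with (a + b) by ring.
  all: f_equal; try ring; f_equal; ring.
Qed.

Lemma pos_pairs_wlog (P : R -> R -> Prop) :
  (forall a b, P a b -> P b a) -> (forall a, 0 < a -> P a a) ->
  (forall a b, 0 < a < b -> P a b) -> forall a b, 0 < a -> 0 < b -> P a b.
Proof.
  intros Hsym Hdiag Hlt a b Ha Hb.
  destruct (Rtotal_order a b) as [Hab|[->|Hab]].
  - apply Hlt; lra.
  - apply Hdiag; lra.
  - apply Hsym, Hlt; lra.
Qed.

Lemma Hmean_le_lambda s a b : -3 <= s -> 0 < a -> 0 < b -> Hmean a b <= lambda s a b.
Proof.
  intros Hs. apply (pos_pairs_wlog (fun a b => Hmean a b <= lambda s a b)).
  - intros x y. rewrite (lambda_sym s x y).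
    unfold Hmean. rewrite Rplus_comm. auto.
  - intros x Hx. rewrite lambda_diag. unfold Hmean. right. field. lra.
  - intros x y Hxy. apply Hmean_le_lambda_lt; auto.
Qed.

Lemma lambda_le_Gmean s a b : s <= -1 -> 0 < a -> 0 < b -> lambda s a b <= Gmean a b.
Proof.
  intros Hs. apply (pos_pairs_wlog (fun a b => lambda s a b <= Gmean a b)).
  - intros x y. rewrite (lambda_sym s x y).
    unfold Gmean. rewrite Rmult_comm. auto.
  - intros x Hx. rewrite lambda_diag. unfold Gmean. rewrite sqrt_square; lra.
  - intros x y Hxy. apply lambda_le_Gmean_lt; auto.
Qed.

(* Multiplying numerator and denominator of lambda_s(1,b) by b^(-s) <= b^3
   shows lambda_s(1,b) = (s-1)/(s+1) b + O(b^3), while H(1,b) = 2b + O(b^2)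
   and (s-1)/(s+1) < 2. *)

Lemma Rpower_3 x : 0 < x -> Rpower x 3 = x * x * x.
Proof.
  intros Hx. replace 3 with (INR 3) by (simpl; ring). rewrite Rpower_pow by auto. simpl. ring.
Qed.

(* With A = (1+b)/2, the bounds b^(-s) <= b^3 and A^s b^(-s) <= (2b)^(-s) <= 8 b^3
   control numerator and denominator of lambda_s(1,b) multiplied by b^(-s). *)
Lemma lambda_one_small s b : s < -3 -> 0 < b <= 1 / 8 ->
  lambda s 1 b <= (s - 1) / (s + 1) * ((b + b * b * b) / (1 - 16 * (b * b * b))).
Proof.
  intros Hs Hb. unfold lambda, Amean. decide_eqs. rewrite !Rpower_base1.
  set (A := (1 + b) / 2). set (u := Rpower b (- s)).
  assert (Hu : 0 < u) by apply Rpower_pos.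
  assert (Hub : u * Rpower b s = 1).
  { unfold u. rewrite <- Rpower_plus. replace (- s + s) with 0 by ring. apply Rpower_O; lra. }
  assert (Hu3 : u <= b * b * b).
  { rewrite <- Rpower_3 by lra. apply Rpower_le_r_lt1; lra. }
  assert (HAu : Rpower A s * u <= 8 * (b * b * b)).
  { assert (Rpower A s <= Rpower (/ 2) s) by (apply Rpower_le_l_nonpos; unfold A; lra).
    assert (Rpower (/ 2) s * u = Rpower (2 * b) (- s)).
    { rewrite Rpower_inv_base by lra. apply Rpower_mult_distr; lra. }
    assert (Rpower (2 * b) (- s) <= 8 * (b * b * b)).
    { replace (8 * (b * b * b)) with (Rpower (2 * b) 3) by (rewrite Rpower_3; lra).
      apply Rpower_le_r_lt1; lra. }
    nra. }
  set (N := 1 + Rpower b (s + 1) - 2 * Rpower A (s + 1)).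
  set (D := 1 + Rpower b s - 2 * Rpower A s).
  assert (HN : N * u <= b + b * b * b).
  { unfold N. rewrite Rpower_succ by lra.
    assert (0 < Rpower A (s + 1)) by apply Rpower_pos. nra. }
  assert (HD : 1 - 16 * (b * b * b) <= D * u) by (unfold D; nra).
  assert (HQ : 0 < 1 - 16 * (b * b * b)) by nra.
  assert (HDpos : 0 < D) by nra.
  apply Rmult_le_compat_l.
  { apply Rlt_le, Rdiv_neg_neg; lra. }
  apply (Rmult_le_reg_r (D * u * (1 - 16 * (b * b * b)))); [apply Rmult_lt_0_compat; nra|].
  replace (N / D * (D * u * (1 - 16 * (b * b * b)))) with (N * u * (1 - 16 * (b * b * b)))
    by (field; lra).
  replace ((b + b * b * b) / (1 - 16 * (b * b * b)) * (D * u * (1 - 16 * (b * b * b))))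
    with ((b + b * b * b) * (D * u)) by (field; lra).
  apply Rle_trans with ((b + b * b * b) * (1 - 16 * (b * b * b))); nra.
Qed.

(* With e = (s+3)/(s+1) in (0,1), so that (s-1)/(s+1) = 2 - e, take b = e/8. *)
Lemma Hmean_counterexample s : s < -3 ->
  exists a b, 0 < a /\ 0 < b /\ lambda s a b < Hmean a b.
Proof.
  intros Hs. set (e := (s + 3) / (s + 1)).
  assert (He : 0 < e < 1).
  { unfold e. split; [apply Rdiv_neg_neg; lra|].
    replace ((s + 3) / (s + 1)) with (1 + 2 * / (s + 1)) by (field; lra).
    assert (/ (s + 1) < 0) by (apply Rinv_lt_0_compat; lra). lra. }
  assert (Hcoef : (s - 1) / (s + 1) = 2 - e) by (unfold e; field; lra).
  exists 1, (e / 8). split; [lra|]. split; [lra|].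
  eapply Rle_lt_trans; [apply lambda_one_small; lra|].
  rewrite Hcoef. set (b := e / 8).
  replace (Hmean 1 b) with (2 * b / (1 + b)) by (unfold Hmean, b; field; lra).
  assert (Hb : 0 < b <= 1 / 8) by (unfold b; lra).
  assert (Hb3 : 0 < 1 - 16 * (b * b * b)).
  { assert (b * b <= 1 / 64) by nra. assert (b * b * b <= 1 / 512) by nra. lra. }
  apply (Rmult_lt_reg_r ((1 - 16 * (b * b * b)) * (1 + b))); [nra|].
  replace ((2 - e) * ((b + b * b * b) / (1 - 16 * (b * b * b))) * ((1 - 16 * (b * b * b)) * (1 + b)))
    with ((2 - e) * (b + b * b * b) * (1 + b)) by (field; lra).
  replace (2 * b / (1 + b) * ((1 - 16 * (b * b * b)) * (1 + b)))
    with (2 * b * (1 - 16 * (b * b * b))) by (field; unfold b; lra).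
  unfold b. assert (0 < e * e) by nra. assert (e * e * e < e * e) by nra. nra.
Qed.

(* Writing x = 1 + v and c = 1 - G >= h^2/2, the integrand of
   dev (s-2) G is x^(s-2) (v + c) phi, and expanding x^p to second order
   gives dev (s-2) G ~ c h^2 + (s-2) h^4/6 >= (s+1) h^4/6 > 0.  A tangent lower
   bound and a quadratic upper bound for x^p near 1 make this rigorous. *)

Lemma ln_le_sub1 x : 0 < x -> ln x <= x - 1.
Proof. intros Hx. pose proof (exp_ineq1_le (ln x)). rewrite exp_ln in *; lra. Qed.

Lemma tangent_le_Rpower x p : 0 < x -> p <= 0 -> 1 + p * (x - 1) <= Rpower x p.
Proof.
  intros Hx Hp. unfold Rpower.
  pose proof (exp_ineq1_le (p * ln x)). pose proof (ln_le_sub1 x Hx). nra.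
Qed.

Lemma Rpower_le_32 y q : 1 / 2 <= y -> -5 <= q <= 0 -> Rpower y q <= 32.
Proof.
  intros Hy Hq. apply Rle_trans with (Rpower (/ 2) q); [apply Rpower_le_l_nonpos; lra|].
  rewrite Rpower_inv_base by lra.
  replace 32 with (Rpower 2 (INR 5)) by (rewrite Rpower_pow by lra; simpl; ring).
  apply Rle_Rpower; simpl; lra.
Qed.

Lemma Rpower_le_affine x q : 1 / 2 <= x <= 1 -> -4 <= q <= 0 ->
  Rpower x q <= 1 + 128 * (1 - x).
Proof.
  intros Hx Hq.
  enough (Rpower x q + 128 * x <= Rpower 1 q + 128 * 1) by (rewrite Rpower_base1 in *; lra).
  apply (incr_of_deriv (fun y => Rpower y q + 128 * y) (fun y => q * Rpower y (q - 1) + 128));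
    [lra| |].
  - intros y Hy. apply (is_derive_plus (fun y => Rpower y q) (fun y => 128 * y)).
    + apply is_derive_Rpower; lra.
    + auto_derive; auto; ring.
  - intros y Hy. assert (Rpower y (q - 1) <= 32) by (apply Rpower_le_32; lra).
    assert (0 < Rpower y (q - 1)) by apply Rpower_pos. nra.
Qed.

Lemma Rpower_le_quadratic x p : 1 / 2 <= x <= 1 -> -3 <= p <= 0 ->
  Rpower x p <= 1 + p * (x - 1) + 192 * ((x - 1) * (x - 1)).
Proof.
  intros Hx Hp.
  set (F := fun y => Rpower y p - p * y - 192 * ((y - 1) * (y - 1))).
  enough (F x <= F 1) by (unfold F in *; rewrite Rpower_base1 in *; lra).
  apply (incr_of_deriv F (fun y => p * Rpower y (p - 1) - p - 384 * (y - 1))); [lra| |].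
  - intros y Hy. unfold F.
    apply (is_derive_minus (fun y => Rpower y p - p * y) (fun y => 192 * ((y - 1) * (y - 1)))).
    + apply (is_derive_minus (fun y => Rpower y p) (fun y => p * y)).
      * apply is_derive_Rpower; lra.
      * auto_derive; auto; ring.
    + auto_derive; auto; ring.
  - intros y Hy. assert (Rpower y (p - 1) <= 1 + 128 * (1 - y)) by (apply Rpower_le_affine; lra).
    assert (Rpower 1 (p - 1) <= Rpower y (p - 1)) by (apply Rpower_le_l_nonpos; lra).
    rewrite Rpower_base1 in *. nra.
Qed.

Section NearDiagonal.

Variables p h c : R.
Hypothesis Hp : -3 <= p <= 0.
Hypothesis Hh : 0 < h <= 1 / 2.
Hypothesis Hc : 0 <= c.

Definition left_poly (x : R) : R :=
  (1 + p * (x - 1)) * ((x - 1) + c) * ((x - 1) + h) + 192 * (x - 1) ^ 3 * ((x - 1) + h).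
Definition right_poly (x : R) : R := (1 + p * (x - 1)) * ((x - 1) + c) * (h - (x - 1)).

Lemma left_poly_le x : 1 - h <= x <= 1 ->
  left_poly x <= Rpower x p * (x - (1 - c)) * (x - (1 - h)).
Proof.
  intros Hx. unfold left_poly.
  replace (x - (1 - c)) with ((x - 1) + c) by ring.
  replace (x - (1 - h)) with ((x - 1) + h) by ring.
  assert (Hlow := tangent_le_Rpower x p ltac:(lra) ltac:(lra)).
  assert (Hup := Rpower_le_quadratic x p ltac:(lra) Hp).
  set (Y := Rpower x p) in *. set (v := x - 1) in *.
  assert (Hvh : 0 <= v + h) by (unfold v; lra). assert (Hv : v <= 0) by (unfold v; lra).
  assert (Hv3 : v ^ 3 <= 0) by (replace (v ^ 3) with (v * (v * v)) by ring; nra).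
  destruct (Rle_dec 0 (v + c)).
  - assert ((1 + p * v) * (v + c) <= Y * (v + c)) by nra. nra.
  - assert ((1 + p * v + 192 * (v * v)) * (v + c) <= Y * (v + c)) by nra.
    assert (192 * v ^ 3 <= 192 * (v * v) * (v + c)) by (simpl; nra).
    nra.
Qed.

Lemma right_poly_le x : 1 <= x <= 1 + h ->
  right_poly x <= Rpower x p * (x - (1 - c)) * ((1 + h) - x).
Proof.
  intros Hx. unfold right_poly.
  replace (x - (1 - c)) with ((x - 1) + c) by ring.
  replace ((1 + h) - x) with (h - (x - 1)) by ring.
  assert (Hlow := tangent_le_Rpower x p ltac:(lra) ltac:(lra)).
  assert (0 <= ((x - 1) + c) * (h - (x - 1))) by (apply Rmult_le_pos; lra).
  rewrite !Rmult_assoc. apply Rmult_le_compat_r; lra.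
Qed.

Lemma dev_near_diag_lower :
  c * h ^ 2 + p * h ^ 4 / 6 - 48 / 5 * h ^ 5 <= dev p (1 - c) (1 - h) (1 + h).
Proof.
  assert (Hmid : (1 - h + (1 + h)) / 2 = 1) by field.
  set (PL := fun x => 192 * (x - 1) ^ 5 / 5 + (p + 192 * h) * (x - 1) ^ 4 / 4
    + (1 + p * (c + h)) * (x - 1) ^ 3 / 3 + (c + h + p * c * h) * (x - 1) ^ 2 / 2 + c * h * (x - 1)).
  set (PR := fun x => - p * (x - 1) ^ 4 / 4 + (p * (h - c) - 1) * (x - 1) ^ 3 / 3
    + (h - c + p * c * h) * (x - 1) ^ 2 / 2 + c * h * (x - 1)).
  replace (c * h ^ 2 + p * h ^ 4 / 6 - 48 / 5 * h ^ 5) with (tent_sum PL PR (1 - h) (1 + h))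
    by (unfold tent_sum, PL, PR; rewrite Hmid; field).
  apply (dev_lower _ _ _ _ PL left_poly PR right_poly); rewrite ?Hmid; [lra| | | |].
  - intros x Hx. unfold PL, left_poly. auto_derive; auto. field.
  - intros x Hx. unfold PR, right_poly. auto_derive; auto. field.
  - intros x Hx. apply left_poly_le; lra.
  - intros x Hx. apply right_poly_le; lra.
Qed.

End NearDiagonal.

Lemma dev_Gmean_near_diag_pos r : -1 < r <= -1 / 2 ->
  let h := (r + 1) / 100 in 0 < dev (r - 2) (Gmean (1 - h) (1 + h)) (1 - h) (1 + h).
Proof.
  intros Hr h. assert (Hh : 0 < h <= 1 / 200) by (unfold h; lra).
  set (c := 1 - Gmean (1 - h) (1 + h)).
  assert (Hc : h ^ 2 / 2 <= c).
  { enough (Gmean (1 - h) (1 + h) <= 1 - h ^ 2 / 2) by (unfold c; lra).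
    unfold Gmean. apply sqrt_le_of_sq; nra. }
  replace (Gmean (1 - h) (1 + h)) with (1 - c) by (unfold c; ring).
  eapply Rlt_le_trans; [|apply dev_near_diag_lower; nra].
  replace (r - 2) with (100 * h - 3) by (unfold h; field).
  assert (0 < h ^ 5) by (apply pow_lt; lra).
  assert (c * h ^ 2 >= h ^ 4 / 2).
  { replace (h ^ 4 / 2) with (h ^ 2 / 2 * h ^ 2) by field. nra. }
  replace ((100 * h - 3) * h ^ 4 / 6) with (100 * h ^ 5 / 6 - h ^ 4 / 2) by field.
  lra.
Qed.

(* For s > -1, raise the exponent r - 2 (r = min(s, -1/2)) to s - 2. *)
Lemma Gmean_counterexample s : -1 < s ->
  exists a b, 0 < a /\ 0 < b /\ Gmean a b < lambda s a b.
Proof.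
  intros Hs. set (r := Rmin s (-1 / 2)).
  assert (Hr : -1 < r <= -1 / 2) by (unfold r, Rmin; destruct (Rle_dec s (-1 / 2)); lra).
  assert (Hrs : r <= s) by apply Rmin_l.
  assert (Hpos := dev_Gmean_near_diag_pos r Hr). set (h := (r + 1) / 100) in *.
  assert (Hh : 0 < h <= 1 / 200) by (unfold h; lra).
  exists (1 - h), (1 + h). split; [lra|]. split; [lra|].
  apply lt_lambda_of_dev; [lra|].
  assert (HG := Gmean_pos (1 - h) (1 + h) ltac:(lra) ltac:(lra)).
  assert (Hshift := dev_shift (r - 2) (s - r) (Gmean (1 - h) (1 + h)) (1 - h) (1 + h)
                      ltac:(lra) HG ltac:(lra)).
  replace (r - 2 + (s - r)) with (s - 2) in Hshift by ring.
  assert (0 < Rpower (Gmean (1 - h) (1 + h)) (s - r)) by apply Rpower_pos.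
  nra.
Qed.

Theorem theorem3 :
  (forall s : R, -3 <= s <= -1 ->
     forall a b : R, 0 < a -> 0 < b ->
       Hmean a b <= lambda s a b /\ lambda s a b <= Gmean a b) /\
  (forall s : R,
     (forall a b : R, 0 < a -> 0 < b -> Hmean a b <= lambda s a b) <-> -3 <= s) /\
  (forall s : R,
     (forall a b : R, 0 < a -> 0 < b -> lambda s a b <= Gmean a b) <-> s <= -1).
Proof.
  split; [|split]; intros s.
  - intros Hs a b Ha Hb. split.
    + apply Hmean_le_lambda; lra.
    + apply lambda_le_Gmean; lra.
  - split; [|intros Hs a b; apply Hmean_le_lambda; auto].
    intros Hall. destruct (Rle_dec (-3) s) as [|Hlt]; [auto|].
    destruct (Hmean_counterexample s ltac:(lra)) as [a [b [Ha [Hb Hab]]]].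
    specialize (Hall a b Ha Hb). lra.
  - split; [|intros Hs a b; apply lambda_le_Gmean; auto].
    intros Hall. destruct (Rle_dec s (-1)) as [|Hlt]; [auto|].
    destruct (Gmean_counterexample s ltac:(lra)) as [a [b [Ha [Hb Hab]]]].
    specialize (Hall a b Ha Hb). lra.
Qed.
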